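(* There is an absolute constant $c$ such that the following holds. Let $0 < \epsilon < 4/5$, $z_1 = (\log\log x)^{1-\epsilon}$ and $z_2 = (\log\log x)^{1+\epsilon}$. Then for all sufficiently large $x$, $$\sum_{z_1 \le r \le z_2} A_r(x) \le c \frac{\epsilon x}{\log\log\log x},$$ the sum being over primes $r$.
   Context: For a positive integer $m$, $m'$ denotes the odd part of $m-1$. For a prime $r$, $A_r(x)$ denotes the number of odd integers $n \le x$ such that $\prod_{p \mid n} \gcd(n', p') = 1$ (product over primes $p$ dividing $n$) and the least prime dividing $n'$ is $r$. $\log$ is the natural logarithm. *)

From mathcomp Require Import all_boot.
From Stdlib Require Import Reals.
Set Implicit Arguments. Unset Strict Implicit. Unset Printing Implicit Defensive.

Definition oddpart (m : nat) : nat := m %/ 2 ^ logn 2 m.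

Definition prime_odd (m : nat) : nat := oddpart m.-1.

Definition good (n : nat) : bool :=
  \prod_(p <- primes n) gcdn (prime_odd n) (prime_odd p) == 1.

(* the least prime dividing m is r (m must have a prime divisor, i.e. m > 1) *)
Definition least_prime_is (r m : nat) : bool := (1 < m) && (pdiv m == r).

Definition A_count (r N : nat) : nat :=
  count (fun n => odd n && good n && least_prime_is r (prime_odd n)) (iota 1 N).

Definition nfloor (x : R) : nat := Z.to_nat (Int_part x).

Definition A (r : nat) (x : R) : nat := A_count r (nfloor x).

Definition Rleb (a b : R) : bool := if Rle_dec a b then true else false.

Definition sumA (z1 z2 x : R) : nat :=
  \sum_(r < (nfloor z2).+1 | prime r && Rleb z1 (INR r) && Rleb (INR r) z2) A r x.

From Pilot Require Import Defs.
From Stdlib Require Import Reals Lra Lia ZArith.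
From mathcomp Require Import all_boot all_order all_algebra Rstruct.
From mathcomp Require ring lra.
Set Implicit Arguments. Unset Strict Implicit. Unset Printing Implicit Defensive.

(* If r is the least prime factor of n', then r divides n - 1 and n - 1 has no odd prime
   factor below r.  For r >= B := 2^k1 this sieves
   [0, x) down to at most (phi(Q)/Q) x/r + 2Q integers, Q the product of the odd primes
   below B.  Counting integers by their part made of odd primes below B gives
   Q/phi(Q) >= sum_{a < B odd} 1/a >= k1/4, and since the primes in (n, 2n] divide
   'C(2n, n) we get sum_{2^k < r <= 2^(k+1)} 1/r <= 2/k.  Hence, if 2^k1 <= z1 and
   z2 <= 2^k2,
       sum_{z1 <= r <= z2} A_r(x) <= 8 x (k2 - k1) / k1^2 + 2 Q (z2 + 1).
   Taking k1, k2 within 1 of (1 -+ eps) logloglog x / log 2 makes the first term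
   O(eps x / logloglog x), while Q <= B^B <= exp((loglog x)^2) makes the second negligible. *)

(** * Integers coprime to Q in an interval *)

Lemma count_coprime_iota Q j : 0 < Q -> count (coprime Q) (iota j Q) = totient Q.
Proof.
move=> Q_gt0; elim: j => [|j IHj].
  rewrite totient_count_coprime -sum1_count big_mkcond /=.
  by rewrite /index_iota subn0; apply: eq_bigr => d _; case: coprime.
move/(congr1 (count (coprime Q))): (iotaD j Q 1).
by rewrite addn1 /= count_cat IHj /= addn0 /coprime gcdnDr addnC => /addIn.
Qed.

Lemma count_coprime_iota_mul Q j s : 0 < Q ->
  count (coprime Q) (iota j (Q * s)) = s * totient Q.
Proof.
move=> Q_gt0; elim: s j => [|s IHs] j; first by rewrite muln0.
by rewrite mulnS iotaD count_cat count_coprime_iota // IHs mulSn.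
Qed.

Lemma count_coprime_iota_le Q t : 0 < Q ->
  count (coprime Q) (iota 0 t) <= (t %/ Q).+1 * totient Q.
Proof.
move=> Q_gt0; rewrite -(count_coprime_iota_mul 0 _ Q_gt0).
have t_le : t <= Q * (t %/ Q).+1 by rewrite mulnC ltnW // ltn_ceil.
by rewrite -(subnKC t_le) iotaD count_cat leq_addr.
Qed.

Lemma totient_le n : totient n <= n.
Proof.
case: n => // n; rewrite -(count_coprime_iota 0) //.
by rewrite -[X in _ <= X](size_iota 0 n.+1) count_size.
Qed.

(* Division by r maps multiples of r coprime to Q injectively to numbers coprime to Q. *)
Lemma count_dvdn_coprime_le Q r N : 0 < r ->
  count (fun m => (r %| m) && coprime Q m) (iota 0 N)
  <= count (coprime Q) (iota 0 (N %/ r).+1).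
Proof.
move=> r_gt0; rewrite -!size_filter -(size_map (divn^~ r)).
apply: uniq_leq_size.
  rewrite map_inj_in_uniq ?filter_uniq ?iota_uniq // => m1 m2.
  rewrite !mem_filter => /andP[/andP[r_m1 _] _] /andP[/andP[r_m2 _] _] eq_div.
  by rewrite -(divnK r_m1) -(divnK r_m2) eq_div.
move=> d /mapP[m]; rewrite mem_filter mem_iota => /andP[/andP[r_m co_m] /andP[_ m_lt]] ->.
rewrite mem_filter mem_iota /= ltnS leq_div2r ?(ltnW m_lt) // andbT.
by move: co_m; rewrite -{1}(divnK r_m) coprimeMr => /andP[].
Qed.

(** * Sieving n - 1 by r and by the odd primes below B *)

Definition odd_primorial (B : nat) : nat := \prod_(p < B | prime p && odd p) p.

Lemma odd_primorial_gt0 B : 0 < odd_primorial B.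
Proof. by rewrite prodn_cond_gt0 // => p /andP[/prime_gt0]. Qed.

Lemma dvdn_odd_primorial B p : prime p -> odd p -> p < B -> p %| odd_primorial B.
Proof.
move=> p_pr p_odd p_lt; rewrite /odd_primorial (bigD1 (Ordinal p_lt)) ?p_pr //=.
exact: dvdn_mulr.
Qed.

Lemma coprime_odd_primorial B m :
  (forall p, prime p -> odd p -> p < B -> ~~ (p %| m)) -> coprime (odd_primorial B) m.
Proof.
move=> ndvd; rewrite /odd_primorial; elim/big_ind: _ => [|a b|p /andP[p_pr p_odd]].
- exact: coprime1n.
- by rewrite coprimeMl => -> ->.
by rewrite prime_coprime // ndvd.
Qed.

Lemma odd_primorial_le B : odd_primorial B <= B ^ B.
Proof.
apply: (@leq_trans (\prod_(p < B) B)); last by rewrite prod_nat_const card_ord.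
rewrite /odd_primorial big_mkcond; apply: leq_prod => p _.
by case: ifP => _; [apply: ltnW | apply: leq_ltn_trans (leq0n p) _].
Qed.

(* In [Defs], [^] on nat is the Stdlib [Nat.pow]. *)
Lemma natpowE m n : Nat.pow m n = m ^ n.
Proof. by elim: n => //= n ->; rewrite expnS. Qed.

Lemma oddpartK m : oddpart m * 2 ^ logn 2 m = m.
Proof. by rewrite /oddpart natpowE divnK // pfactor_dvdnn. Qed.

Lemma dvdn_oddpart p m : odd p -> p %| m -> p %| oddpart m.
Proof.
move=> p_odd; rewrite -{1}(oddpartK m) Gauss_dvdl // coprimeXr //.
by rewrite coprimen2.
Qed.

Lemma A_count_le_sieve r B N : prime r -> B <= r ->
  A_count r N <= count (fun m => (r %| m) && coprime (odd_primorial B) m) (iota 0 N).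
Proof.
move=> r_pr B_le; rewrite /A_count -[1]/(1 + 0) iotaDl count_map.
apply: sub_count => m; rewrite /= /prime_odd /= => /andP[_ /andP[_ /eqP pdiv_r]].
have r_dvd : r %| oddpart m by rewrite -pdiv_r pdiv_dvd.
rewrite (dvdn_trans r_dvd) -?[X in _ %| X](oddpartK m) ?dvdn_mulr //=.
apply: coprime_odd_primorial => p p_pr p_odd p_lt; apply/negP => /(dvdn_oddpart p_odd).
by move/(pdiv_min_dvd (prime_gt1 p_pr)); rewrite pdiv_r leqNgt (leq_trans p_lt).
Qed.

Lemma A_count_le r B N : prime r -> B <= r ->
  A_count r N <= ((N %/ r).+1 %/ odd_primorial B).+1 * totient (odd_primorial B).
Proof.
move=> r_pr B_le; apply: leq_trans (A_count_le_sieve N r_pr B_le) _.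
apply: leq_trans (count_dvdn_coprime_le _ _ (prime_gt0 r_pr)) _.
exact: count_coprime_iota_le (odd_primorial_gt0 B).
Qed.

(** * Counting integers by their odd part below B *)

Lemma sum_count_fibers_le (T U : eqType) (f : T -> U) (As : seq U) (s : seq T) :
  uniq As -> \sum_(a <- As) count (fun m => f m == a) s <= size s.
Proof.
move=> As_uniq; rewrite -(count_predT s).
suff -> : \sum_(a <- As) count (fun m => f m == a) s = count (fun m => f m \in As) s.
  exact: sub_count.
elim: As As_uniq => [|a As IHAs]; first by rewrite big_nil; elim: s.
move=> /andP[a_notin As_uniq]; rewrite big_cons IHAs // -count_predUI.
rewrite (@eq_count _ (predI _ _) pred0) ?count_pred0 ?addn0; last first.
  by move=> m /=; apply/negP => /andP[/eqP-> fm_in]; rewrite fm_in in a_notin.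
by apply: eq_count => m /=; rewrite in_cons.
Qed.

Definition odd_below (B : nat) : nat_pred := [pred p | odd p && (p < B)].

Lemma partn_odd_below B a b : odd a -> a < B -> 0 < b ->
  coprime (odd_primorial B) b -> (a * b)`_(odd_below B) = a.
Proof.
move=> a_odd a_lt b_gt0 co_b; have a_gt0 : 0 < a by case: a a_odd {a_lt}.
rewrite partnM // part_pnat_id ?part_p'nat ?muln1 //.
  apply/pnatP => // p p_pr p_dvd; rewrite !inE /= negb_and.
  case p_odd: (odd p) => //=; apply/negP => p_lt.
  have : p %| gcdn (odd_primorial B) b by rewrite dvdn_gcd p_dvd dvdn_odd_primorial.
  by rewrite (eqP co_b) dvdn1 => /eqP p1; rewrite p1 in p_pr.
apply/pnatP => // p p_pr p_dvd; rewrite inE /= (leq_ltn_trans (dvdn_leq a_gt0 p_dvd)) //.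
by rewrite andbT; apply: contraLR a_odd; rewrite -!dvdn2 => /dvdn_trans->.
Qed.

Lemma count_partn_odd_below_ge B a : odd a -> a < B ->
  (B`! %/ a) * totient (odd_primorial B)
  <= count (fun m => m`_(odd_below B) == a) (iota 1 (odd_primorial B * B`!)).
Proof.
move=> a_odd a_lt; set Q := odd_primorial B.
have a_gt0 : 0 < a by case: a a_odd {a_lt}.
have a_dvd : a %| B`! by rewrite dvdn_fact // a_gt0 ltnW.
rewrite -(count_coprime_iota_mul 1 _ (odd_primorial_gt0 B)) -!size_filter.
rewrite -(size_map (muln a)); apply: uniq_leq_size.
  rewrite map_inj_uniq ?filter_uniq ?iota_uniq // => u v /eqP.
  by rewrite eqn_pmul2l // => /eqP.
move=> d /mapP[b]; rewrite mem_filter mem_iota => /andP[co_b /andP[b_gt0 b_lt]] ->.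
rewrite mem_filter mem_iota partn_odd_below // eqxx /= muln_gt0 a_gt0 b_gt0 /=.
move: b_lt; rewrite !add1n !ltnS => b_le.
by rewrite -(divnK a_dvd) mulnA [a * b]mulnC leq_pmul2r.
Qed.

(* Counting 1, ..., Q B! by their odd_below-part; the fibres are disjoint. *)
Lemma sum_odd_below_le B :
  \sum_(a <- iota 0 B | odd a) (B`! %/ a) * totient (odd_primorial B)
  <= odd_primorial B * B`!.
Proof.
have := sum_count_fibers_le (fun m => m`_(odd_below B))
  (iota 1 (odd_primorial B * B`!)) (filter_uniq odd (iota_uniq 0 B)).
rewrite size_iota => /(leq_trans _); apply; rewrite -big_filter.
rewrite [leqLHS]big_seq [leqRHS]big_seq; apply: leq_sum => a.
by rewrite mem_filter mem_iota => /andP[a_odd /andP[_ a_lt]]; apply: count_partn_odd_below_ge.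
Qed.

Lemma count_odd_iota_double m j : count odd (iota m j.*2) = j.
Proof.
elim: j m => [|j IHj] m //.
rewrite doubleS -addn2 iotaD count_cat IHj /= addn0.
by case: (odd _); rewrite addn1.
Qed.

Lemma count_odd_iota_pow2 k : 2 ^ k.+1 <= 4 * count odd (iota (2 ^ k) (2 ^ k)).
Proof.
case: k => [|k] //.
by rewrite [2 ^ k.+1]expnS mul2n count_odd_iota_double !expnS mulnA.
Qed.

(** * Primes in (n, 2n] *)

Lemma prime_ndvd_fact p n : prime p -> n < p -> ~~ (p %| n`!).
Proof.
move=> p_pr n_lt; rewrite fact_prod Euclid_dvd_prod // big_has; apply/hasPn => i.
by rewrite mem_index_iota /= ltnS => /andP[i_gt0 i_le]; rewrite gtnNdvd // (leq_ltn_trans i_le).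
Qed.

Lemma dvdn_prod_primes (s : seq nat) m : uniq s -> all prime s ->
  all (dvdn^~ m) s -> \prod_(p <- s) p %| m.
Proof.
elim: s => [|p s IHs] /=; first by rewrite big_nil dvd1n.
move=> /andP[p_notin s_uniq] /andP[p_pr s_pr] /andP[p_dvd s_dvd].
rewrite big_cons Gauss_dvd ?p_dvd ?IHs // prime_coprime // Euclid_dvd_prod // big_has.
apply/hasPn => q q_in; rewrite /= dvdn_prime2 ?(allP s_pr q q_in) //.
by apply: contraNneq p_notin => ->.
Qed.

Lemma bin_middle_le n : 'C(n.*2, n) <= 2 ^ n.*2.
Proof.
have := expnDn 1 1 n.*2; rewrite add1n => ->.
have n_lt : n < n.*2.+1 by rewrite ltnS -addnn leq_addr.
by rewrite (bigD1 (Ordinal n_lt)) //= !exp1n !muln1 leq_addr.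
Qed.

(* The primes in (n, 2n] all divide 'C(2n, n). *)
Lemma prime_interval_count_le (s : seq nat) n : uniq s -> 0 < n ->
  n ^ count (fun r => prime r && (n < r <= n.*2)) s <= 2 ^ n.*2.
Proof.
move=> s_uniq n_gt0; set P := fun r => _.
apply: leq_trans (bin_middle_le n); rewrite -iter_muln_1 -big_const_seq.
apply: (@leq_trans (\prod_(r <- s | P r) r)).
  by apply: leq_prod => r /andP[_ /andP[/ltnW]].
apply: dvdn_leq; first by rewrite bin_gt0 -addnn leq_addr.
rewrite -big_filter; apply: dvdn_prod_primes; first exact: filter_uniq.
  by apply/allP => r; rewrite mem_filter => /andP[/andP[]].
apply/allP => r; rewrite mem_filter => /andP[/andP[r_pr /andP[n_lt r_le]] _] /=.
have := bin_fact (leq_addr n n); rewrite addnK addnn => fact_eq.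
have : r %| n.*2`! by rewrite dvdn_fact // prime_gt0.
by rewrite -fact_eq Gauss_dvdl // coprimeMr !prime_coprime // prime_ndvd_fact.
Qed.

Lemma prime_pow2 k : prime (2 ^ k) = (k == 1).
Proof.
case: k => [|[|k]] //; apply/negP => /pdiv_id; rewrite pdiv_pfactor // => two_eq.
have : 2 ^ 1 < 2 ^ k.+2 by rewrite ltn_exp2l.
by rewrite -two_eq.
Qed.

(** * Reciprocal sums and the bound for the sum of the A_r *)

Section ReciprocalSums.
Import Order.TTheory GRing.Theory Num.Theory.
Import mathcomp.algebra_tactics.ring mathcomp.algebra_tactics.lra.
Local Open Scope ring_scope.

Variable F : realFieldType.

Definition odd_harmonic (B : nat) : F := \sum_(a <- iota 0 B | odd a) a%:R^-1.

Lemma totient_mul_odd_harmonic_le B :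
  (totient (odd_primorial B))%:R * odd_harmonic B <= (odd_primorial B)%:R.
Proof.
have fact_gt0 : 0 < (B`!)%:R :> F by rewrite ltr0n fact_gt0.
rewrite -(ler_pM2r fact_gt0) -natrM.
move: (sum_odd_below_le B); rewrite -(ler_nat F) => /(le_trans _); apply.
rewrite natr_sum /odd_harmonic mulr_sumr mulr_suml big_seq_cond [X in _ <= X]big_seq_cond.
apply: ler_sum => a /andP[]; rewrite mem_iota => /andP[_ a_lt] a_odd.
have a_gt0 : (0 < a)%N by case: a a_odd {a_lt}.
rewrite natrM natf_div; last by rewrite dvdn_fact // a_gt0 ltnW.
by rewrite mulrC mulrA mulrAC.
Qed.

(* Each block [2^k, 2^(k+1)) contributes at least 1/4. *)
Lemma odd_harmonic_pow2_ge k : k%:R / 4 <= odd_harmonic (2 ^ k).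
Proof.
elim: k => [|k IHk]; first by rewrite mul0r sumr_ge0 // => a _; rewrite invr_ge0 ler0n.
rewrite expnS mul2n -addnn /odd_harmonic iotaD big_cat /= add0n -/(odd_harmonic _).
set block := \sum_(a <- iota (2 ^ k) (2 ^ k) | odd a) a%:R^-1.
suff : 1 / 4 <= block by move: IHk; rewrite -natr1; lra.
have pow_gt0 : 0 < (2 ^ k.+1)%:R :> F by rewrite ltr0n expn_gt0.
apply: (@le_trans _ _ (\sum_(a <- iota (2 ^ k) (2 ^ k) | odd a) (2 ^ k.+1)%:R^-1)).
  rewrite big_const_seq iter_addr_0 -[_ *+ count _ _]mulr_natr ler_pdivlMl //.
  by move: (count_odd_iota_pow2 k); rewrite -(ler_nat F) natrM; lra.
rewrite big_seq_cond [X in _ <= X]big_seq_cond; apply: ler_sum => a.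
rewrite mem_iota => /andP[/andP[pow_le a_lt] _].
have a_gt0 : (0 < a)%N by apply: leq_trans pow_le; rewrite expn_gt0.
rewrite lef_pV2 ?posrE ?ltr0n ?expn_gt0 // ler_nat expnS mul2n -addnn ltnW //.
Qed.

Lemma totient_odd_primorial_le k : (0 < k)%N ->
  (totient (odd_primorial (2 ^ k)))%:R <= 4 * (odd_primorial (2 ^ k))%:R / k%:R :> F.
Proof.
move=> k_gt0; rewrite ler_pdivlMr ?ltr0n //.
have := totient_mul_odd_harmonic_le (2 ^ k).
have := ler_wpM2l (ler0n F (totient (odd_primorial (2 ^ k)))) (odd_harmonic_pow2_ge k).
set phi := (totient _)%:R; rewrite mulrA; set phik := phi * k%:R; lra.
Qed.

(* Chebyshev: at most 2n / log2 n primes lie in (n, 2n]. *)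
Lemma sum_prime_recip_dyadic_le (s : seq nat) k : uniq s -> (0 < k)%N ->
  \sum_(r <- s | prime r && (2 ^ k < r <= 2 ^ k.+1)%N) r%:R^-1 <= 2 / k%:R :> F.
Proof.
move=> s_uniq k_gt0; set n := (2 ^ k)%N.
have -> : (2 ^ k.+1 = n.*2)%N by rewrite expnS mul2n.
have n_gt0 : (0 < n)%N by rewrite expn_gt0.
have count_le : (k * count (fun r => prime r && (n < r <= n.*2)%N) s <= n.*2)%N.
  rewrite -(leq_exp2l _ _ (ltnSn 1)) expnM -/n.
  exact: prime_interval_count_le.
apply: (@le_trans _ _ (\sum_(r <- s | prime r && (n < r <= n.*2)%N) n%:R^-1)).
  apply: ler_sum => r /andP[_ /andP[n_lt _]].
  have r_gt0 : (0 < r)%N := ltn_trans n_gt0 n_lt.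
  by rewrite lef_pV2 ?posrE ?ltr0n // ler_nat ltnW.
rewrite big_const_seq iter_addr_0 -[_ *+ _]mulr_natr ler_pdivrMl ?ltr0n //.
by rewrite mulrA ler_pdivlMr ?ltr0n // -!natrM ler_nat mulnC muln2.
Qed.

Lemma sum_prime_recip_pow2_le (s : seq nat) k d : uniq s -> (0 < k)%N ->
  \sum_(r <- s | prime r && (2 ^ k < r <= 2 ^ (k + d))%N) r%:R^-1
  <= 2 * d%:R / k%:R :> F.
Proof.
move=> s_uniq k_gt0; elim: d => [|d IHd].
  rewrite mulr0 mul0r big_pred0 // => r; rewrite addn0.
  by apply/negbTE/and3P => -[_ /leq_trans lt_le /lt_le]; rewrite ltnn.
set b := (2 ^ (k + d))%N.
have a_le_b : (2 ^ k <= b)%N by rewrite leq_exp2l ?leq_addr.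
have b_lt_c : (b < 2 ^ (k + d.+1))%N by rewrite ltn_exp2l // addnS.
have lower r : [&& prime r, 2 ^ k < r & r <= 2 ^ (k + d.+1)]%N && (r <= b)%N
               = [&& prime r, 2 ^ k < r & r <= b]%N.
  by rewrite -!andbA (andb_idl (fun r_le => leq_trans r_le (ltnW b_lt_c))).
have upper r : [&& prime r, 2 ^ k < r & r <= 2 ^ (k + d.+1)]%N && ~~ (r <= b)%N
               = [&& prime r, b < r & r <= 2 ^ (k + d).+1]%N.
  rewrite -ltnNge -!andbA addnS [(r <= _)%N && _]andbC [(2 ^ k < r)%N && _]andbA.
  by rewrite (andb_idl (leq_ltn_trans a_le_b)).
rewrite (bigID (fun r => r <= b)%N) (eq_bigl _ _ lower) (eq_bigl _ _ upper) /=.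
have kd_gt0 : (0 < k + d)%N by rewrite addn_gt0 k_gt0.
have := sum_prime_recip_dyadic_le s_uniq kd_gt0.
have : 2 / (k + d)%:R <= 2 / k%:R :> F.
  by rewrite ler_pM2l // lef_pV2 ?posrE ?ltr0n // ler_nat leq_addr.
move: IHd; rewrite -natr1 !mulrDl; lra.
Qed.

Lemma ler_sum_subpred (I : Type) (s : seq I) (P Q : pred I) (f : I -> F) :
  (forall i, P i -> Q i) -> (forall i, Q i -> 0 <= f i) ->
  \sum_(i <- s | P i) f i <= \sum_(i <- s | Q i) f i.
Proof.
move=> PQ f_ge0; rewrite [X in _ <= X](bigID P) /= (eq_bigl P) => [|i]; last first.
  by rewrite andbC; apply/andb_idr/PQ.
by rewrite lerDl sumr_ge0 // => i /andP[/f_ge0].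
Qed.

Lemma natr_divn_le a b : (0 < b)%N -> (a %/ b)%:R <= a%:R / b%:R :> F.
Proof. by move=> b_gt0; rewrite ler_pdivlMr ?ltr0n // -natrM ler_nat leq_divM. Qed.

Lemma A_count_le_density r B N : prime r -> (B <= r)%N ->
  (A_count r N)%:R <= (totient (odd_primorial B))%:R / (odd_primorial B)%:R * (N%:R / r%:R)
                      + 2 * (odd_primorial B)%:R :> F.
Proof.
move=> r_pr B_le; set Q := odd_primorial B; set phi := totient Q.
have Q_gt0 : (0 < Q)%N := odd_primorial_gt0 B.
have Q_ge1 : 1 <= Q%:R :> F by rewrite ler1n.
have phi_le : phi%:R <= Q%:R :> F by rewrite ler_nat totient_le.
have phi_ge0 : 0 <= phi%:R :> F := ler0n _ _.
have phiQ_le1 : phi%:R / Q%:R <= 1 :> F by rewrite ler_pdivrMr ?ltr0n // mul1r.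
have quot_le : ((N %/ r).+1 %/ Q)%:R <= (N%:R / r%:R + 1) / Q%:R :> F.
  apply: le_trans (natr_divn_le _ Q_gt0) _; rewrite ler_wpM2r ?invr_ge0 ?ler0n //.
  by rewrite -natr1 lerD2r natr_divn_le ?prime_gt0.
have := A_count_le N r_pr B_le; rewrite -(ler_nat F) natrM -natr1 -/Q -/phi.
move/le_trans; apply; apply: le_trans (ler_wpM2r phi_ge0 (lerD quot_le (lexx 1))) _.
rewrite !mulrDl mul1r; lra.
Qed.

Lemma sum_A_count_le (P : pred nat) M N k1 k2 : (2 <= k1 <= k2)%N ->
  (forall r, P r -> prime r && (2 ^ k1 <= r <= 2 ^ k2)%N) ->
  (\sum_(r < M.+1 | P r) A_count r N)%:R
  <= 8 * N%:R * (k2 - k1)%:R / k1%:R ^+ 2 + 2 * (odd_primorial (2 ^ k1))%:R * M.+1%:R :> F.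
Proof.
move=> /andP[k1_ge2 k1_le] P_range; set Q := odd_primorial (2 ^ k1).
rewrite -(big_mkord P (fun r => A_count r N)).
have k1_gt0 : (0 < k1)%N by apply: leq_trans k1_ge2.
have QR_gt0 : 0 < Q%:R :> F by rewrite ltr0n odd_primorial_gt0.
have density_le : (totient Q)%:R / Q%:R <= 4 / k1%:R :> F.
  by rewrite ler_pdivrMr // mulrAC totient_odd_primorial_le.
have A_le r : P r -> (A_count r N)%:R <= 4 / k1%:R * (N%:R / r%:R) + 2 * Q%:R :> F.
  move=> Pr; case/and3P: (P_range r Pr) => r_pr lo _.
  apply: le_trans (A_count_le_density N r_pr lo) _.
  by rewrite lerD2r ler_wpM2r // divr_ge0 ?ler0n.
have primes_le : \sum_(0 <= r < M.+1 | P r) r%:R^-1 <= 2 * (k2 - k1)%:R / k1%:R :> F.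
  have := sum_prime_recip_pow2_le (k2 - k1) (iota_uniq 0 M.+1) k1_gt0.
  rewrite subnKC //; apply: le_trans.
  apply: ler_sum_subpred => [r Pr|r _]; last by rewrite invr_ge0 ler0n.
  case/and3P: (P_range r Pr) => r_pr lo hi; rewrite r_pr hi ltn_neqAle lo /= !andbT.
  by apply/eqP => r_eq; move: r_pr; rewrite -r_eq prime_pow2 gtn_eqF.
rewrite natr_sum; apply: le_trans (ler_sum _ A_le) _.
rewrite big_split /= -mulr_sumr -[X in _ * X]mulr_sumr mulrA.
have consts_le : \sum_(0 <= i < M.+1 | P i) 2 * Q%:R <= 2 * Q%:R * M.+1%:R :> F.
  apply: le_trans (ler_sum_subpred (Q := xpredT) _ _ _) _ => // [i _|].
    by rewrite mulr_ge0 ?ler0n.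
  by rewrite big_const_seq count_predT size_iota subn0 iter_addr_0 [_ * M.+1%:R]mulr_natr.
apply: lerD consts_le; apply: le_trans (ler_wpM2l _ primes_le) _.
  by rewrite mulr_ge0 ?divr_ge0 ?ler0n.
rewrite le_eqVlt; apply/orP; left; apply/eqP; field.
by rewrite pnatr_eq0 -lt0n.
Qed.

End ReciprocalSums.

(** * Choice of k1, k2 and asymptotics *)

Open Scope R_scope.

Lemma exp_le_compat a b : a <= b -> exp a <= exp b.
Proof. by case=> [/exp_increasing/Rlt_le|->] //; apply: Rle_refl. Qed.

Lemma lt_ln_of_exp_lt a x : exp a < x -> a < ln x.
Proof. by move=> lt_x; rewrite -[a]ln_exp; apply: ln_increasing => //; apply: exp_pos. Qed.

Lemma exp3_lt_inv a x : exp (exp (exp a)) < x ->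
  [/\ a < ln (ln (ln x)), exp (ln (ln (ln x))) = ln (ln x) & exp (exp (ln (ln x))) = x].
Proof.
move=> x_gt; have lnx_gt := lt_ln_of_exp_lt x_gt; have y_gt := lt_ln_of_exp_lt lnx_gt.
have e1 := exp_pos a; have e2 := exp_pos (exp a); have e3 := exp_pos (exp (exp a)).
split; [exact: lt_ln_of_exp_lt | rewrite exp_ln //; lra | rewrite !exp_ln //; lra].
Qed.

Lemma nfloor_bounds a : 0 <= a -> INR (nfloor a) <= a < INR (nfloor a) + 1.
Proof.
move=> a_ge0; rewrite /nfloor; have [lo hi] := base_Int_part a.
have : Z.lt (-1) (Int_part a) by apply: lt_IZR; lra.
by move=> int_gt; rewrite INR_IZR_INZ Z2Nat.id; [lra | lia].
Qed.

Lemma INR_pow2 k : INR (2 ^ k) = exp (INR k * ln 2).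
Proof.
have two_gt0 : 0 < 2 by lra.
by rewrite -natpowE pow_INR -ln_pow // exp_ln //; apply: pow_lt.
Qed.

Lemma ln2_bounds : / 2 < ln 2 < 1.
Proof.
split; first exact: ln_lt_2.
rewrite -[1]ln_exp; apply: ln_increasing; first lra.
by have := exp_ineq1 1; lra.
Qed.

Lemma pow2_nfloor_bounds a : 0 <= a ->
  INR (2 ^ nfloor (a / ln 2)) <= exp a < INR (2 ^ (nfloor (a / ln 2)).+1).
Proof.
move=> a_ge0; have [ln2_gt ln2_lt] := ln2_bounds.
have inv_ln2_gt0 : 0 < / ln 2 by apply: Rinv_0_lt_compat; lra.
have [lo hi] := nfloor_bounds (Rmult_le_pos _ _ a_ge0 (Rlt_le _ _ inv_ln2_gt0)).
rewrite !INR_pow2 S_INR; split.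
  apply: exp_le_compat; apply: (Rmult_le_reg_r (/ ln 2)) => //.
  by rewrite Rmult_assoc Rinv_r; lra.
apply: exp_increasing; apply: (Rmult_lt_reg_r (/ ln 2)) => //.
by rewrite Rmult_assoc Rinv_r; lra.
Qed.

Lemma dyadic_bracket eps L : 0 < eps < 4 / 5 -> 20 <= L -> 1 <= eps * L ->
  exists k1 k2 : nat,
    [/\ (2 <= k1 <= k2)%N, INR (2 ^ k1) <= exp ((1 - eps) * L),
        exp ((1 + eps) * L) <= INR (2 ^ k2), INR k2 - INR k1 <= 6 * (eps * L)
      & L / 10 <= INR k1].
Proof.
move=> eps_bd L_ge epsL_ge; have [ln2_gt ln2_lt] := ln2_bounds.
set a1 := (1 - eps) * L; set a2 := (1 + eps) * L; set il := / ln 2.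
have a1_ge : L / 5 <= a1 by rewrite /a1; nra.
have a2E : a2 = a1 + 2 * (eps * L) by rewrite /a1 /a2; ring.
have il_bd : 1 < il < 2.
  rewrite /il; split; [rewrite -Rinv_1 | rewrite -[X in _ < X](Rinv_inv 2)];
    by apply: Rinv_lt_contravar; lra.
have a1_le : a1 <= a1 * il by nra.
have a12 : a1 * il <= a2 * il by rewrite /a1 /a2; nra.
have gap : a2 * il - a1 * il <= 4 * (eps * L).
  have : eps * L * il <= eps * L * 2 by apply: Rmult_le_compat_l; lra.
  have -> : a2 * il - a1 * il = 2 * (eps * L * il) by rewrite /a1 /a2; ring.
  lra.
have [[lo1 hi1] [lo2 hi2]] := (pow2_nfloor_bounds (ltac:(lra) : 0 <= a1),
                               pow2_nfloor_bounds (ltac:(lra) : 0 <= a2)).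
have [f1_lo f1_hi] := nfloor_bounds (ltac:(lra) : 0 <= a1 * il).
have [f2_lo f2_hi] := nfloor_bounds (ltac:(lra) : 0 <= a2 * il).
exists (nfloor (a1 / ln 2)), (nfloor (a2 / ln 2)).+1.
rewrite /Rdiv -/il in lo1 hi1 lo2 hi2 *; rewrite S_INR.
have k1_ge : L / 10 <= INR (nfloor (a1 * il)) by lra.
split=> //; [apply/andP; split | exact: Rlt_le | lra].
  by apply/leP/INR_le; rewrite [INR 2]/=; lra.
by apply/ltnW/ltP/INR_lt; rewrite S_INR; lra.
Qed.

Lemma exp_pow x n : exp x ^ n = exp (INR n * x).
Proof.
have ex_gt0 := exp_pos x.
by rewrite -[LHS]exp_ln ?ln_pow ?ln_exp //; apply: pow_lt.
Qed.

Lemma pow4_le_exp y : 0 <= y -> (y / 4) ^ 4 <= exp y.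
Proof.
move=> y_ge0; have -> : exp y = exp (y / 4) ^ 4 by rewrite exp_pow; congr exp; simpl; field.
by apply: pow_incr; have := exp_ineq1_le (y / 4); lra.
Qed.

Lemma cubic_le_exp y : 768 <= y -> y ^ 3 + y ^ 2 + y <= exp y.
Proof.
move=> y_ge; apply: Rle_trans (pow4_le_exp (ltac:(lra) : 0 <= y)).
have : 0 <= y ^ 3 * (y - 768) by apply: Rmult_le_pos; [apply: pow_le|]; lra.
have : 0 <= y ^ 2 * (y - 1) by apply: Rmult_le_pos; [apply: pow_le|]; lra.
have : 0 <= y * (y - 1) by apply: Rmult_le_pos; lra.
simpl; nra.
Qed.

Lemma odd_primorial_le_exp B y : INR B <= y -> INR (odd_primorial B) <= exp (y * y).
Proof.
move=> B_le; have B_ge0 := pos_INR B.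
apply: Rle_trans (le_INR _ _ (elimT leP (odd_primorial_le B))) _.
rewrite -natpowE pow_INR; apply: Rle_trans (_ : exp (INR B) ^ B <= _).
  by apply: pow_incr; have := exp_ineq1_le (INR B); lra.
by rewrite exp_pow; apply: exp_le_compat; apply: Rmult_le_compat.
Qed.

Lemma mul_ge1_of_inv_le eps y : 0 < eps -> / eps <= y -> 1 <= eps * y.
Proof.
move=> eps_gt0 inv_le; rewrite -(Rinv_r eps); last lra.
by apply: Rmult_le_compat_l; lra.
Qed.

Lemma main_term_le N x eps L a d : 0 < L -> 0 <= N <= x -> 0 <= d <= 6 * (eps * L) ->
  L / 10 <= a -> 8 * N * d / a ^ 2 <= 4800 * (eps * x / L).
Proof.
move=> L_gt0 [N_ge0 N_le] [d_ge0 d_le] a_ge.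
have a2_ge : (L / 10) ^ 2 <= a ^ 2 by apply: pow_incr; lra.
have aL_gt0 : 0 < (L / 10) ^ 2 by apply: pow_lt; lra.
apply: (Rle_trans _ (8 * x * (6 * (eps * L)) / (L / 10) ^ 2)); last by right; field; lra.
apply: Rmult_le_compat; [nra | by left; apply: Rinv_0_lt_compat; lra | nra |].
exact: Rinv_le_contravar.
Qed.

Lemma error_term_le eps y Q M : 0 < eps -> 768 <= y -> / eps <= y ->
  0 <= Q <= exp (y * y) -> 0 <= M <= y * y ->
  2 * Q * (M + 1) <= eps * exp (exp y) / ln y.
Proof.
move=> eps_gt0 y_ge inv_eps_le [Q_ge0 Q_le] [M_ge0 M_le].
have cubic := cubic_le_exp y_ge.
have lny_gt0 : 0 < ln y by rewrite -ln_1; apply: ln_increasing; lra.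
have lny_le : ln y <= y by have := exp_ineq1_le (ln y); rewrite exp_ln; lra.
have poly_le : (M + 1) * ln y <= exp y.
  apply: Rle_trans (_ : (y * y + 1) * y <= _); first by apply: Rmult_le_compat; lra.
  by simpl in cubic; nra.
have two_le : 2 <= eps * exp y.
  have := mul_ge1_of_inv_le eps_gt0 inv_eps_le.
  by simpl in cubic; nra.
have exp_exp_ge : exp (y * y) * exp y * exp y <= exp (exp y).
  by rewrite -!exp_plus; apply: exp_le_compat; simpl in cubic; nra.
apply: (Rmult_le_reg_r (ln y)) => //.
rewrite /Rdiv (Rmult_assoc (eps * _)) Rinv_l ?Rmult_1_r; last lra.
have EF_gt0 : 0 < exp (y * y) * exp y by apply: Rmult_lt_0_compat; apply: exp_pos.
apply: (Rle_trans _ (2 * (exp (y * y) * exp y))).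
  rewrite !Rmult_assoc; apply: Rmult_le_compat_l; first lra.
  by apply: Rmult_le_compat; nra.
apply: Rle_trans (_ : eps * (exp (y * y) * exp y * exp y) <= _); first by nra.
by apply: Rmult_le_compat_l; lra.
Qed.

(* Qualified, since [Rstruct] exports another [Rleb]. *)
Lemma Rleb_le a b : Defs.Rleb a b -> a <= b.
Proof. by rewrite /Defs.Rleb; case: Rle_dec. Qed.

Lemma sumA_le x z1 z2 k1 k2 : (2 <= k1 <= k2)%N ->
  INR (2 ^ k1) <= z1 -> z2 <= INR (2 ^ k2) ->
  INR (sumA z1 z2 x) <= 8 * INR (nfloor x) * (INR k2 - INR k1) / INR k1 ^ 2
                        + 2 * INR (odd_primorial (2 ^ k1)) * (INR (nfloor z2) + 1).
Proof.
move=> k12 z1_ge z2_le.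
have range r : prime r && Defs.Rleb z1 (INR r) && Defs.Rleb (INR r) z2 ->
                prime r && (2 ^ k1 <= r <= 2 ^ k2)%N.
  case/andP=> /andP[-> /Rleb_le z1_le] /Rleb_le le_z2.
  by rewrite /= -!(Num.Theory.ler_nat R) -!INRE; apply/andP; split; apply/RleP; lra.
have := sum_A_count_le R (nfloor z2) (nfloor x) k12 range.
case/andP: k12 => _ k1_le; rewrite GRing.natrB // -(GRing.natr1 _ (nfloor z2)) => sum_le.
by apply/RleP; rewrite !RealsE; exact: sum_le.
Qed.

Theorem lemma4p2 :
  exists c : R, forall eps : R, 0 < eps < 4/5 ->
    exists X : R, forall x : R, X < x ->
      let z1 := Rpower (ln (ln x)) (1 - eps) in
      let z2 := Rpower (ln (ln x)) (1 + eps) in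
      INR (sumA z1 z2 x) <= c * (eps * x / ln (ln (ln x))).
Proof.
exists 4801 => eps eps_bd; have [eps_gt0 _] := eps_bd.
have inv_eps_gt0 : 0 < / eps by apply: Rinv_0_lt_compat.
exists (exp (exp (exp (1000 + / eps)))) => x /exp3_lt_inv[L_gt expL expy] z1 z2.
rewrite /z1 /z2 /Rpower; set y := ln (ln x) in L_gt expL expy *.
set L := ln y in L_gt expL *.
have L_lt_y : L < y by rewrite -[X in _ < X]expL; have := exp_ineq1_le L; lra.
have epsL : 1 <= eps * L by apply: mul_ge1_of_inv_le; lra.
have [k1 [k2 [k12 lo hi dk k1_ge]]] := dyadic_bracket eps_bd (ltac:(lra) : 20 <= L) epsL.
have z1_le : exp ((1 - eps) * L) <= y by rewrite -expL; apply: exp_le_compat; nra.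
have z2_le : exp ((1 + eps) * L) <= y * y.
  by rewrite -expL -exp_plus; apply: exp_le_compat; nra.
have [N_le _] := nfloor_bounds (Rlt_le _ _ (ltac:(rewrite -expy; apply: exp_pos) : 0 < x)).
have [M_le _] := nfloor_bounds (Rlt_le _ _ (exp_pos ((1 + eps) * L))).
have d_ge0 : 0 <= INR k2 - INR k1 by case/andP: k12 => _ /leP/le_INR; lra.
have := main_term_le (ltac:(lra) : 0 < L) (conj (pos_INR _) N_le) (conj d_ge0 dk) k1_ge.
have := error_term_le eps_gt0 (ltac:(lra) : 768 <= y) (ltac:(lra) : / eps <= y)
  (conj (pos_INR _) (odd_primorial_le_exp (Rle_trans _ _ _ lo z1_le)))
  (conj (pos_INR _) (Rle_trans _ _ _ M_le z2_le)).
have := sumA_le x k12 lo hi.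
by rewrite expy -/L; lra.
Qed.
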